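(* In the setting described in the context, fix $i\in[m]$, $b_{i0}\in\mathbb{R}$, $b_i\in\mathbb{R}^n$, and let $z_i^L=\min_{x\in P}\frac{b_{i0}+b_i^\top x}{a_{i0}+a_i^\top x}$, $z_i^U=\max_{x\in P}\frac{b_{i0}+b_i^\top x}{a_{i0}+a_i^\top x}$, $d_i^L=\min_{x\in P}(a_{i0}+a_i^\top x)>0$, $d_i^U=\max_{x\in P}(a_{i0}+a_i^\top x)$. Then every $(\rho,y,x)\in\mathcal{R}_{\mathrm{QP}}$, with $\zeta_i:=b_{i0}\rho^i+b_i^\top y^i$ and $\delta_i:=a_{i0}+a_i^\top x$, satisfies the McCormick inequalities obtained by relaxing $\zeta_i\delta_i=b_{i0}+b_i^\top x$: \[ \begin{aligned} b_{i0}+b_i^\top x&\ge z_i^L\delta_i+d_i^L\zeta_i-z_i^Ld_i^L, & b_{i0}+b_i^\top x&\ge z_i^U\delta_i+d_i^U\zeta_i-z_i^Ud_i^U,\\ b_{i0}+b_i^\top x&\le z_i^U\delta_i+d_i^L\zeta_i-z_i^Ud_i^L, & b_{i0}+b_i^\top x&\le z_i^L\delta_i+d_i^U\zeta_i-z_i^Ld_i^U. \end{aligned} \]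
   Context: Let $m,n,p$ be integers with $0\le p\le n$, $a_{i0}\in\mathbb{R}$, $a_i\in\mathbb{R}^n$ ($i\in[m]$), and let $\bar Cx\le\bar d$ be a linear system that includes $0\le x_j\le1$ for $j\in[p]$. Let $P=\{x\mid\bar Cx\le\bar d\}$, assumed nonempty and bounded, with $a_{i0}+a_i^\top x>0$ on $P$ for all $i$. $\mathcal{R}_{\mathrm{QP}}$ is the set of $(\rho,y,x)$, $\rho=(\rho^i)_{i\in[m]}$, $y=(y^i)_{i\in[m]}$, $y^i\in\mathbb{R}^n$, $x\in\mathbb{R}^n$, for which there exist $W^1,\dots,W^m\in\mathbb{R}^{n\times n}$ with, for all $i\in[m]$: $\bar CW^i\bar C^\top-\bar d(y^i)^\top\bar C^\top-\bar Cy^i\bar d^\top+\rho^i\bar d\bar d^\top\ge0$ (entrywise); $a_{i0}\rho^i+a_i^\top y^i=1$; $\rho^i\ge0$; $x_j=a_{i0}y^i_j+\sum_{k=1}^na_{ik}W^i_{jk}$ for $j\in[n]$; $\bar Cy^i\le\rho^i\bar d$; $W^i_{jj}=y^i_j$ for $j\in[p]$; and $\bar Cx\le\bar d$. *)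

From HB Require Import structures.
From mathcomp Require Import all_boot all_order all_algebra.
Set Implicit Arguments. Unset Strict Implicit. Unset Printing Implicit Defensive.
Import Order.TTheory GRing.Theory Num.Theory.
Local Open Scope ring_scope.

Definition affine (R : realFieldType) (n : nat) (a0 : R) (a x : 'cV[R]_n) : R :=
  a0 + \sum_(j < n) a j 0 * x j 0.

Definition inP (R : realFieldType) (k n : nat) (C : 'M[R]_(k, n)) (d : 'cV[R]_k)
  (x : 'cV[R]_n) : Prop :=
  forall r : 'I_k, (C *m x) r 0 <= d r 0.

(* The system C x <= d contains the rows  x_j <= 1  and  -x_j <= 0  for j in [p]. *)
Definition has_box_rows (R : realFieldType) (k n p : nat) (C : 'M[R]_(k, n))
  (d : 'cV[R]_k) : Prop :=
  forall j : 'I_n, (j < p)%N ->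
    (exists r : 'I_k, (forall l : 'I_n, C r l = (l == j)%:R) /\ d r 0 = 1) /\
    (exists r : 'I_k, (forall l : 'I_n, C r l = - (l == j)%:R) /\ d r 0 = 0).

Definition bounded_set (R : realFieldType) (n : nat) (S : 'cV[R]_n -> Prop) : Prop :=
  exists M : R, forall x, S x -> forall j : 'I_n, `|x j 0| <= M.

Definition is_min_on (R : realFieldType) (n : nat) (S : 'cV[R]_n -> Prop)
  (f : 'cV[R]_n -> R) (z : R) : Prop :=
  (exists x, S x /\ f x = z) /\ (forall x, S x -> z <= f x).
Definition is_max_on (R : realFieldType) (n : nat) (S : 'cV[R]_n -> Prop)
  (f : 'cV[R]_n -> R) (z : R) : Prop :=
  (exists x, S x /\ f x = z) /\ (forall x, S x -> f x <= z).

Definition R_QP (R : realFieldType) (m n p k : nat) (C : 'M[R]_(k, n)) (d : 'cV[R]_k)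
  (a0 : 'I_m -> R) (a : 'I_m -> 'cV[R]_n)
  (rho : 'I_m -> R) (y : 'I_m -> 'cV[R]_n) (x : 'cV[R]_n) : Prop :=
  exists W : 'I_m -> 'M[R]_n,
    (forall i : 'I_m,
      (forall r s : 'I_k,
         0 <= (C *m W i *m C^T - d *m (y i)^T *m C^T - C *m y i *m d^T
               + rho i *: (d *m d^T)) r s) /\
      a0 i * rho i + \sum_(j < n) a i j 0 * y i j 0 = 1 /\
      0 <= rho i /\
      (forall j : 'I_n, x j 0 = a0 i * y i j 0 + \sum_(l < n) a i l 0 * W i j l) /\
      (forall r : 'I_k, (C *m y i) r 0 <= rho i * d r 0) /\
      (forall j : 'I_n, (j < p)%N -> W i j j = y i j 0)) /\
    inP C d x.

From HB Require Import structures.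
From mathcomp Require Import all_boot all_order all_algebra.
From mathcomp Require Import ring lra.
Set Implicit Arguments. Unset Strict Implicit. Unset Printing Implicit Defensive.
Import Order.TTheory GRing.Theory Num.Theory.
Local Open Scope ring_scope.

(* The lifted point (rho, y, W) defines the moment matrix M = [rho y^T; y W], and
   (u, v) |-> u M v^T is a bilinear form on coefficient rows (u0, u^T) of affine
   functions.  The constraints of R_QP say exactly that G M G^T >= 0 entrywise,
   where the rows of G are the affine functions 1 and d_r - C_r x that are
   nonnegative on P.  By the affine Farkas lemma (proved here by Fourier-Motzkin
   elimination), every affine function nonnegative on the nonempty polyhedron P
   is a nonnegative combination of rows of G; hence u M v^T >= 0 whenever u and
   v are both nonnegative on P.  The equations of R_QP give M (a0, a)^T = (1, x)
   and M (1, 0)^T = (rho, y), so pairing num - z den (z = z^L, z^U, with the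
   appropriate sign) with den - d^L and d^U - den yields the four McCormick
   inequalities. *)

Section FourierMotzkin.
Variable R : realFieldType.

Lemma one_var_system_solvable (I : finType) (e a : I -> R) :
  (forall i, a i = 0 -> 0 <= e i) ->
  (forall p q, 0 < a p -> a q < 0 -> 0 <= - a q * e p + a p * e q) ->
  exists t, forall i, 0 <= e i + a i * t.
Proof.
move=> e_ge0 pair_ge0.
have lower p t : 0 < a p -> (0 <= e p + a p * t) = (- e p / a p <= t).
  by move=> ap; rewrite ler_pdivrMr // mulrC; apply/idP/idP => ?; lra.
have upper q t : a q < 0 -> (0 <= e q + a q * t) = (t <= - e q / a q).
  by move=> aq; rewrite ler_ndivlMr // mulrC; apply/idP/idP => ?; lra.
have sep p q : 0 < a p -> a q < 0 -> - e p / a p <= - e q / a q.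
  move=> ap aq; rewrite -upper //.
  have : a p * (- e p / a p) = - e p by rewrite mulrC divfK ?gt_eqF.
  have := pair_ge0 p q ap aq; set t := - e p / a p; nra.
have [p ap|no_pos] := pickP (fun p => 0 < a p).
  have [pm apm pm_max] := @arg_maxP _ _ I p (fun p => 0 < a p) (fun p => - e p / a p) ap.
  exists (- e pm / a pm) => i.
  case: (ltrgtP (a i) 0) => ai; last by rewrite ai mul0r addr0 e_ge0.
    by rewrite upper // sep.
  by rewrite lower //; apply: pm_max.
have [q aq|no_neg] := pickP (fun q => a q < 0).
  have [qm aqm qm_min] := @arg_minP _ _ I q (fun q => a q < 0) (fun q => - e q / a q) aq.
  exists (- e qm / a qm) => i.
  case: (ltrgtP (a i) 0) => ai; last by rewrite ai mul0r addr0 e_ge0.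
    by rewrite upper //; apply: qm_min.
  by move: (no_pos i); rewrite /= ai.
exists 0 => i; rewrite mulr0 addr0; apply: e_ge0.
case: (ltrgtP (a i) 0) => // ai.
  by move: (no_neg i); rewrite /= ai.
by move: (no_pos i); rewrite /= ai.
Qed.

(* Coefficients are indexed by nat so that eliminating the last variable does
   not change their type. *)
Definition affine_nat N (c0 : R) (c x : nat -> R) : R := c0 + \sum_(j < N) c j * x j.

Lemma sum_delta (I : finType) (i0 : I) (f : I -> R) : \sum_i (i == i0)%:R * f i = f i0.
Proof. by rewrite (bigD1 i0) //= eqxx mul1r big1 ?addr0 // => i /negPf ->; rewrite mul0r. Qed.

Section Elimination.
Variables (I : finType) (N : nat) (c0 : I -> R) (c : I -> nat -> R).

(* Row i itself when its coefficient on variable N vanishes, and for p, q with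
   coefficients of opposite signs on variable N the combination cancelling it. *)
Definition elim_weight (k : I + I * I) (i : I) : R :=
  match k with
  | inl i0 => ((i == i0) && (c i0 N == 0))%:R
  | inr (p, q) => if (0 < c p N) && (c q N < 0)
                  then (i == p)%:R * - c q N + (i == q)%:R * c p N else 0
  end.

Lemma elim_weight_ge0 k i : 0 <= elim_weight k i.
Proof.
case: k => [i0|[p q]] /=; first exact: ler0n.
case: ifP => // /andP [cp cq].
by apply: addr_ge0; apply: mulr_ge0; rewrite ?ler0n ?oppr_ge0 ?ltW.
Qed.

Lemma sum_elim_weight k (f : I -> R) :
  \sum_i elim_weight k i * f i =
  match k with
  | inl i0 => if c i0 N == 0 then f i0 else 0
  | inr (p, q) => if (0 < c p N) && (c q N < 0) then - c q N * f p + c p N * f q else 0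
  end.
Proof.
case: k => [i0|[p q]] /=.
  case: eqP => _; last by rewrite big1 // => i _; rewrite andbF mul0r.
  by under eq_bigr do rewrite andbT; apply: sum_delta.
case: ifP => _; last by rewrite big1 // => i _; rewrite mul0r.
under eq_bigr do rewrite mulrDl -!mulrA.
by rewrite big_split /= !sum_delta.
Qed.

Definition elim_row0 k := \sum_i elim_weight k i * c0 i.
Definition elim_row k j := \sum_i elim_weight k i * c i j.

Lemma elim_row_last k : elim_row k N = 0.
Proof.
rewrite /elim_row sum_elim_weight; case: k => [i0|[p q]].
  by case: eqP.
by case: ifP => // _; rewrite mulNr mulrC addNr.
Qed.

Lemma affine_nat_elim k x :
  affine_nat N (elim_row0 k) (elim_row k) x =
  \sum_i elim_weight k i * affine_nat N (c0 i) (c i) x.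
Proof.
under [RHS]eq_bigr do rewrite mulrDr mulr_sumr.
rewrite big_split /= exchange_big /affine_nat /elim_row; congr (_ + _).
by apply: eq_bigr => j _; rewrite mulr_suml; apply: eq_bigr => i _; rewrite mulrA.
Qed.

Lemma elim_feasible x :
  (forall k, 0 <= affine_nat N (elim_row0 k) (elim_row k) x) ->
  exists x', forall i, 0 <= affine_nat N.+1 (c0 i) (c i) x'.
Proof.
move=> feas.
pose e i := affine_nat N (c0 i) (c i) x.
have {}feas k : 0 <= \sum_i elim_weight k i * e i by rewrite -affine_nat_elim.
have [t Ht] : exists t, forall i, 0 <= e i + c i N * t.
  apply: one_var_system_solvable => [i ci|p q cp cq].
    by have := feas (inl i); rewrite sum_elim_weight ci eqxx.
  by have := feas (inr (p, q)); rewrite sum_elim_weight cp cq.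
exists (fun j => if j == N then t else x j) => i.
rewrite /affine_nat big_ord_recr /= eqxx addrA.
suff -> : \sum_(j < N) c i j * (if (j : nat) == N then t else x j) = \sum_(j < N) c i j * x j.
  exact: Ht.
by apply: eq_bigr => j _; rewrite ltn_eqF.
Qed.

End Elimination.

Lemma fourier_motzkin N (I : finType) (c0 : I -> R) (c : I -> nat -> R) :
  ~ (exists x, forall i, 0 <= affine_nat N (c0 i) (c i) x) ->
  exists2 lam : I -> R, (forall i, 0 <= lam i) &
    (forall j, (j < N)%N -> \sum_i lam i * c i j = 0) /\ \sum_i lam i * c0 i < 0.
Proof.
elim: N I c0 c => [|N IH] I c0 c infeas.
  have [i ci|all_ge0] := pickP (fun i => c0 i < 0); last first.
    case: infeas; exists (fun _ => 0) => i; rewrite /affine_nat big_ord0 addr0.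
    by rewrite leNgt all_ge0.
  exists (fun i' => (i' == i)%:R) => [i'|]; first exact: ler0n.
  by split=> //; rewrite sum_delta.
have elim_infeas : ~ exists x, forall k,
    0 <= affine_nat N (elim_row0 N c0 c k) (elim_row N c k) x.
  by move=> [x /elim_feasible].
have [lam' lam'_ge0 [lam'_lin lam'_const]] := IH _ _ _ elim_infeas.
have swap (f : I -> R) : \sum_i (\sum_k lam' k * elim_weight N c k i) * f i =
    \sum_k lam' k * \sum_i elim_weight N c k i * f i.
  under eq_bigr do rewrite mulr_suml.
  rewrite exchange_big; apply: eq_bigr => k _; rewrite mulr_sumr.
  by apply: eq_bigr => i _; rewrite mulrA.
exists (fun i => \sum_k lam' k * elim_weight N c k i) => [i|].
  by apply: sumr_ge0 => k _; apply: mulr_ge0 => //; apply: elim_weight_ge0.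
split; last by rewrite swap.
move=> j; rewrite ltnS leq_eqVlt => /orP [/eqP ->|jN]; rewrite swap.
  by rewrite big1 // => k _; rewrite -/(elim_row N c k N) elim_row_last mulr0.
exact: lam'_lin.
Qed.

Definition coef_of {N} (v : 'rV[R]_N) (j : nat) : R :=
  if insub j is Some j' then v 0 j' else 0.

Lemma coef_ofE N (v : 'rV[R]_N) (j : 'I_N) : coef_of v j = v 0 j.
Proof. by rewrite /coef_of valK. Qed.

Lemma affine_nat_mx N c0 (v : 'rV[R]_N) (X : nat -> R) :
  affine_nat N c0 (coef_of v) X = c0 + (v *m \col_(j < N) X j) 0 0.
Proof.
by rewrite /affine_nat mxE; congr (_ + _); apply: eq_bigr => j _; rewrite coef_ofE mxE.
Qed.

End FourierMotzkin.

Section Farkas.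
Variables (R : realFieldType) (k n : nat) (C : 'M[R]_(k, n)) (d : 'cV[R]_k).

Definition nonneg_on (P : 'cV[R]_n -> Prop) (u : 'rV[R]_(1 + n)) :=
  forall x, P x -> 0 <= (u *m col_mx 1%:M x) 0 0.

Definition constraint_mx : 'M[R]_(1 + k, 1 + n) := block_mx 1%:M 0 d (- C).

Variables (x0 : 'cV[R]_n) (x0P : inP C d x0).

Lemma homogenized_bound (u : 'rV[R]_(1 + n)) (X : 'cV[R]_(1 + n)) :
  nonneg_on (inP C d) u -> (forall r, 0 <= (constraint_mx *m X) r 0) ->
  -1 < (u *m X) 0 0.
Proof.
(* Split X = (t, xv): for t > 0, xv / t lies in P; for t = 0, xv is a recession
   direction of P along which u decreases without bound. *)
rewrite -[X]vsubmxK; set T := usubmx X; set xv := dsubmx X => u_ge0 GX_ge0.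
have GX : constraint_mx *m col_mx T xv = col_mx T (d *m T - C *m xv).
  by rewrite mul_block_col mul1mx mul0mx addr0 mulNmx.
have T_ge0 : 0 <= T 0 0 by have := GX_ge0 (lshift k 0); rewrite GX col_mxEu.
have Cxv r : (C *m xv) r 0 <= d r 0 * T 0 0.
  have := GX_ge0 (rshift 1 r); rewrite GX col_mxEd !mxE big_ord1 subr_ge0.
  by rewrite mxE.
move: T_ge0; rewrite le0r => /predU1P [T_eq0|T_gt0]; last first.
  pose x := (T 0 0)^-1 *: xv.
  have xP : inP C d x.
    by move=> r; rewrite -scalemxAr mxE ler_pdivrMl // mulrC.
  have := u_ge0 x xP.
  have -> : col_mx 1%:M x = (T 0 0)^-1 *: col_mx T xv.
    by rewrite scale_col_mx {2}[T]mx11_scalar scale_scalar_mx mulVf ?gt_eqF.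
  rewrite -scalemxAr mxE pmulr_rge0 ?invr_gt0 //; lra.
rewrite ltNge; apply/negP => uX.
pose s := (u *m col_mx 1%:M x0) 0 0 + 1.
have s_ge0 : 0 <= s by rewrite /s; have := u_ge0 x0 x0P; lra.
pose x := x0 + s *: xv.
have xP : inP C d x.
  move=> r; have := x0P r; have := Cxv r; rewrite T_eq0 mulr0.
  move=> /(mulr_ge0_le0 s_ge0); rewrite mulmxDr -scalemxAr !mxE; lra.
have := u_ge0 x xP.
have -> : col_mx 1%:M x = col_mx 1%:M x0 + s *: col_mx T xv.
  by rewrite scale_col_mx add_col_mx [T]mx11_scalar T_eq0 scale_scalar_mx mulr0 raddf0 addr0.
have : s * (u *m col_mx T xv) 0 0 <= s * -1 by rewrite ler_wpM2l.
move: uX; rewrite /s mulmxDr -scalemxAr !mxE; lra.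
Qed.

Lemma farkas_affine (u : 'rV[R]_(1 + n)) : nonneg_on (inP C d) u ->
  exists2 lam : 'rV[R]_(1 + k), (forall r, 0 <= lam 0 r) & u = lam *m constraint_mx.
Proof.
move=> u_ge0.
(* The system G X >= 0, u X <= -1, infeasible by [homogenized_bound]; its
   Fourier-Motzkin certificate has a positive weight on the last row. *)
pose c0 (o : 'I_(1 + k) + 'I_1) : R := if o is inl _ then 0 else -1.
pose c (o : 'I_(1 + k) + 'I_1) := coef_of (if o is inl r then row r constraint_mx else - u).
have infeas : ~ exists X, forall o, 0 <= affine_nat (1 + n) (c0 o) (c o) X.
  move=> [X feas].
  have /homogenized_bound : forall r, 0 <= (constraint_mx *m \col_(j < 1 + n) X j) r 0.
    by move=> r; have := feas (inl r); rewrite affine_nat_mx add0r -row_mul mxE.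
  move=> /(_ u u_ge0); have := feas (inr 0); rewrite affine_nat_mx mulNmx mxE /c0; lra.
have [lam lam_ge0 [lam_lin lam_const]] := fourier_motzkin infeas.
move: lam_const; rewrite big_sumType big1 => [|r _]; last by rewrite mulr0.
rewrite big_ord1 /= add0r mulrN1 oppr_lt0 => nu_gt0.
exists (\row_r (lam (inl r) / lam (inr 0))) => [r|].
  by rewrite mxE; apply: divr_ge0 => //; apply: ltW.
apply/rowP => j; have := lam_lin j (ltn_ord j).
rewrite big_sumType big_ord1 /= /c coef_ofE mxE.
under eq_bigr do rewrite coef_ofE mxE.
rewrite mulrN => /eqP; rewrite subr_eq0 => /eqP /(congr1 (fun t => t / lam (inr 0))).
rewrite [_ * u 0 j]mulrC mulfK ?gt_eqF // => <-; rewrite mulr_suml mxE.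
by apply: eq_bigr => r _; rewrite mulrAC; congr (_ * _); rewrite mxE.
Qed.

End Farkas.

(* The coefficient row of c0 + c^T x, evaluated by multiplication with (1, x). *)
Definition affine_coef (R : ringType) n (c0 : R) (c : 'cV[R]_n) : 'rV[R]_(1 + n) :=
  row_mx c0%:M c^T.

Lemma affine_coef_col (R : comRingType) n (c0 t : R) (c x : 'cV[R]_n) :
  (affine_coef c0 c *m col_mx t%:M x) 0 0 = c0 * t + \sum_j c j 0 * x j 0.
Proof.
rewrite /affine_coef mul_row_col -scalar_mxM !mxE eqxx mulr1n.
by congr (_ + _); apply: eq_bigr => j _; rewrite mxE.
Qed.

Lemma affine_coef_comb_col (R : comRingType) n (s1 s2 c0 e0 t : R) (c e x : 'cV[R]_n) :
  ((s1 *: affine_coef c0 c + s2 *: affine_coef e0 e) *m col_mx t%:M x) 0 0 =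
  s1 * (c0 * t + \sum_j c j 0 * x j 0) + s2 * (e0 * t + \sum_j e j 0 * x j 0).
Proof.
rewrite mulmxDl -!scalemxAl -!affine_coef_col.
by set u := affine_coef c0 c *m _; set v := affine_coef e0 e *m _; rewrite !mxE.
Qed.

Section Moment.
Variables (R : realFieldType) (k n : nat) (C : 'M[R]_(k, n)) (d : 'cV[R]_k).
Variables (rho : R) (y : 'cV[R]_n) (W : 'M[R]_n).

Definition moment_mx : 'M[R]_(1 + n) := block_mx rho%:M y^T y W.

Hypothesis rho_ge0 : 0 <= rho.
Hypothesis Cy_le : forall r, (C *m y) r 0 <= rho * d r 0.
Hypothesis CWC_ge0 : forall r s,
  0 <= (C *m W *m C^T - d *m y^T *m C^T - C *m y *m d^T + rho *: (d *m d^T)) r s.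

Lemma constraint_moment_ge0 r s :
  0 <= (constraint_mx C d *m moment_mx *m (constraint_mx C d)^T) r s.
Proof.
have -> : constraint_mx C d *m moment_mx *m (constraint_mx C d)^T =
    block_mx rho%:M (rho *: d^T - (C *m y)^T) (rho *: d - C *m y)
      (C *m W *m C^T - d *m y^T *m C^T - C *m y *m d^T + rho *: (d *m d^T)).
  rewrite /constraint_mx /moment_mx tr_block_mx !mulmx_block.
  rewrite !mul1mx !mul0mx !addr0 trmx0 !mulmx0 !addr0 tr_scalar_mx !mulmx1.
  rewrite mul_scalar_mx mul_mx_scalar linearN /= !mulmxN !mulNmx !mulmxDl !mulNmx.
  rewrite -scalemxAl trmx_mul; congr block_mx.
  by apply/matrixP => i j; rewrite !mxE; ring.
case: (split_ordP r) => r' ->; case: (split_ordP s) => s' ->.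
- by rewrite block_mxEul !ord1 mxE.
- by rewrite block_mxEur !ord1 !mxE subr_ge0; have := Cy_le s'; rewrite mxE.
- by rewrite block_mxEdl !ord1 !mxE subr_ge0; have := Cy_le r'; rewrite mxE.
- by rewrite block_mxEdr CWC_ge0.
Qed.

Lemma moment_mx_unit_coef : moment_mx *m (affine_coef 1 0)^T = col_mx rho%:M y.
Proof.
by rewrite /affine_coef tr_row_mx trmxK tr_scalar_mx mul_block_col !mulmx1 !mulmx0 !addr0.
Qed.

Variables (x0 : 'cV[R]_n) (x0P : inP C d x0).

Lemma moment_form_ge0 u v : nonneg_on (inP C d) u -> nonneg_on (inP C d) v ->
  0 <= (u *m moment_mx *m v^T) 0 0.
Proof.
move=> /(farkas_affine x0P) [lu lu_ge0 ->] /(farkas_affine x0P) [lv lv_ge0 ->].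
set G := constraint_mx C d.
have -> : lu *m G *m moment_mx *m (lv *m G)^T = lu *m (G *m moment_mx *m G^T) *m lv^T.
  by rewrite trmx_mul !mulmxA.
rewrite mxE; apply: sumr_ge0 => s _; rewrite [lv^T s 0]mxE; apply: mulr_ge0 => //.
rewrite mxE; apply: sumr_ge0 => r _; apply: mulr_ge0 => //.
exact: constraint_moment_ge0.
Qed.

Variables (a0 : R) (a x : 'cV[R]_n).
Hypothesis a_norm : a0 * rho + \sum_j a j 0 * y j 0 = 1.
Hypothesis x_eq : forall j, x j 0 = a0 * y j 0 + \sum_l a l 0 * W j l.

Lemma moment_mx_affine_coef : moment_mx *m (affine_coef a0 a)^T = col_mx 1%:M x.
Proof.
rewrite /affine_coef tr_row_mx trmxK tr_scalar_mx mul_block_col; congr col_mx.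
  apply/matrixP => i j; rewrite !ord1 -scalar_mxM !mxE eqxx mulr1n -a_norm mulrC.
  by congr (_ + _); apply: eq_bigr => l _; rewrite mxE mulrC.
apply/colP => j; rewrite mul_mx_scalar !mxE x_eq mulrC.
by congr (_ + _); apply: eq_bigr => l _; rewrite mulrC.
Qed.

Lemma moment_mccormick u s1 s2 :
  nonneg_on (inP C d) u ->
  nonneg_on (inP C d) (s1 *: affine_coef a0 a + s2 *: affine_coef 1 0) ->
  0 <= s1 * (u *m col_mx 1%:M x) 0 0 + s2 * (u *m col_mx rho%:M y) 0 0.
Proof.
move=> /moment_form_ge0 uv /uv; rewrite linearD !linearZ /= -mulmxA mulmxDr.
by rewrite -!scalemxAr moment_mx_affine_coef moment_mx_unit_coef mulmxDr -!scalemxAr !mxE.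
Qed.

Lemma moment_mccormick_affine (b0 t1 t2 s1 s2 : R) (b : 'cV[R]_n) :
  nonneg_on (inP C d) (t1 *: affine_coef b0 b + t2 *: affine_coef a0 a) ->
  nonneg_on (inP C d) (s1 *: affine_coef a0 a + s2 *: affine_coef 1 0) ->
  0 <= s1 * (t1 * affine b0 b x + t2 * affine a0 a x) +
       s2 * (t1 * (b0 * rho + \sum_j b j 0 * y j 0) + t2).
Proof.
by move=> /moment_mccormick uv /uv; rewrite !affine_coef_comb_col a_norm !mulr1.
Qed.

End Moment.

Section AffineBounds.
Variables (R : realFieldType) (n : nat) (P : 'cV[R]_n -> Prop) (b0 a0 : R) (b a : 'cV[R]_n).

Lemma affine_coef_unit_comb_col (s1 s2 : R) (x : 'cV[R]_n) :
  ((s1 *: affine_coef a0 a + s2 *: affine_coef 1 0) *m col_mx 1%:M x) 0 0 =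
  s1 * affine a0 a x + s2.
Proof.
rewrite affine_coef_comb_col [X in _ + s2 * (_ + X)]big1 => [|j _]; last by rewrite mxE mul0r.
by rewrite addr0 !mulr1.
Qed.

Lemma min_affine_nonneg z : (forall x, P x -> z <= affine a0 a x) ->
  nonneg_on P (1 *: affine_coef a0 a + (- z) *: affine_coef 1 0).
Proof. by move=> zle x /zle; rewrite affine_coef_unit_comb_col; lra. Qed.

Lemma max_affine_nonneg z : (forall x, P x -> affine a0 a x <= z) ->
  nonneg_on P ((-1) *: affine_coef a0 a + z *: affine_coef 1 0).
Proof. by move=> lez x /lez; rewrite affine_coef_unit_comb_col; lra. Qed.

Hypothesis den_gt0 : forall x, P x -> 0 < affine a0 a x.

Lemma min_ratio_nonneg z : (forall x, P x -> z <= affine b0 b x / affine a0 a x) ->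
  nonneg_on P (1 *: affine_coef b0 b + (- z) *: affine_coef a0 a).
Proof.
move=> zle x xP; have := zle x xP; rewrite ler_pdivlMr ?den_gt0 //.
by rewrite /affine affine_coef_comb_col !mulr1; lra.
Qed.

Lemma max_ratio_nonneg z : (forall x, P x -> affine b0 b x / affine a0 a x <= z) ->
  nonneg_on P ((-1) *: affine_coef b0 b + z *: affine_coef a0 a).
Proof.
move=> lez x xP; have := lez x xP; rewrite ler_pdivrMr ?den_gt0 //.
by rewrite /affine affine_coef_comb_col !mulr1; lra.
Qed.

End AffineBounds.

Theorem proposition6 (R : realFieldType) (m n p k : nat)
  (C : 'M[R]_(k, n)) (d : 'cV[R]_k) (a0 : 'I_m -> R) (a : 'I_m -> 'cV[R]_n)
  (hpn : (p <= n)%N)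
  (hbox : has_box_rows p C d)
  (hne : exists x, inP C d x)
  (hbdd : bounded_set (inP C d))
  (hpos : forall (i : 'I_m) (x : 'cV[R]_n), inP C d x -> 0 < affine (a0 i) (a i) x)
  (i : 'I_m) (b0 : R) (b : 'cV[R]_n) (zL zU dL dU : R)
  (hzL : is_min_on (inP C d) (fun x => affine b0 b x / affine (a0 i) (a i) x) zL)
  (hzU : is_max_on (inP C d) (fun x => affine b0 b x / affine (a0 i) (a i) x) zU)
  (hdL : is_min_on (inP C d) (fun x => affine (a0 i) (a i) x) dL)
  (hdU : is_max_on (inP C d) (fun x => affine (a0 i) (a i) x) dU)
  (rho : 'I_m -> R) (y : 'I_m -> 'cV[R]_n) (x : 'cV[R]_n)
  (hR : R_QP p C d a0 a rho y x) :
  let zeta := b0 * rho i + \sum_(j < n) b j 0 * y i j 0 in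
  let delta := affine (a0 i) (a i) x in
  let lhs := affine b0 b x in
  [/\ zL * delta + dL * zeta - zL * dL <= lhs,
      zU * delta + dU * zeta - zU * dU <= lhs,
      lhs <= zU * delta + dL * zeta - zU * dL &
      lhs <= zL * delta + dU * zeta - zL * dU].
Proof.
move=> zeta delta lhs.
have [W [/(_ i) [CWC_ge0 [a_norm [rho_ge0 [x_eq [Cy_le _]]]]] _]] := hR.
have [x0 x0P] := hne.
have mc := moment_mccormick_affine rho_ge0 Cy_le CWC_ge0 x0P a_norm x_eq.
have uL := min_ratio_nonneg (hpos i) hzL.2.
have uU := max_ratio_nonneg (hpos i) hzU.2.
have vL := min_affine_nonneg hdL.2.
have vU := max_affine_nonneg hdU.2.
have := mc _ _ _ _ _ _ uL vL; have := mc _ _ _ _ _ _ uU vU.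
have := mc _ _ _ _ _ _ uU vL; have := mc _ _ _ _ _ _ uL vU.
rewrite /lhs /delta /zeta; split; lra.
Qed.
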